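(* Let $A\in\mathbb{R}^{n\times n}$, $b\in\mathbb{R}^n$, and $\mathcal{U}=[\underline{u},\overline{u}]\subset\mathbb{R}$ with $\underline{u}<\overline{u}$. Consider the system $x[i+1]=Ax[i]+bu[i]$, $x[0]=0$, with $u[i]\in\mathcal{U}$ for all $i\in\mathbb{Z}_{\ge 0}$, and let $\mathcal{R}(i,0)$ denote its reachable set at time $i$ (with $\mathcal{R}(0,0)=\{0\}$). Then for every $i\in\mathbb{N}$, $$A^{i-1}b\,\mathcal{U}=\mathcal{R}(i,0)\ominus\mathcal{R}(i-1,0).$$
   Context: The reachable set at time $i$ is $\mathcal{R}(i,0)=\{\phi_u(i;0)\mid u:\mathbb{Z}_{\ge0}\to\mathcal{U}\}$, where $\phi_u(\cdot;0)$ is the trajectory of the system with initial state $0$ under the input sequence $u$. For $B\in\mathbb{R}^{n\times m}$ and $\mathcal{X}\subset\mathbb{R}^m$, $B\mathcal{X}=\{Bx\mid x\in\mathcal{X}\}$. For $\mathcal{A},\mathcal{B}\subset\mathbb{R}^n$, the Minkowski sum is $\mathcal{A}\oplus\mathcal{B}=\{a+b\mid a\in\mathcal{A},b\in\mathcal{B}\}$ and the Minkowski difference is $\mathcal{A}\ominus\mathcal{B}=\{c\in\mathbb{R}^n\mid \{c\}\oplus\mathcal{B}\subseteq\mathcal{A}\}$. *)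

From HB Require Import structures.
From mathcomp Require Import all_boot all_order all_algebra.
From mathcomp Require Import classical_sets reals.
Set Implicit Arguments. Unset Strict Implicit. Unset Printing Implicit Defensive.
Import Order.TTheory GRing.Theory Num.Theory.
Local Open Scope ring_scope.
Local Open Scope classical_set_scope.

Fixpoint traj (R : pzRingType) (n : nat) (A : 'M[R]_n) (b : 'cV[R]_n)
  (u : nat -> R) (i : nat) : 'cV[R]_n :=
  match i with
  | 0 => 0
  | k.+1 => A *m traj A b u k + u k *: b
  end.

Definition reach (R : pzRingType) (n : nat) (A : 'M[R]_n) (b : 'cV[R]_n)
  (U : set R) (i : nat) : set 'cV[R]_n :=
  [set x | exists u : nat -> R, (forall k, U (u k)) /\ traj A b u i = x].

Definition Icc (R : realType) (lo hi : R) : set R := [set x | lo <= x <= hi].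

(* B X for a column vector B in R^{n x 1} and X a subset of R (= R^1). *)
Definition vec_image (R : pzRingType) (n : nat) (B : 'cV[R]_n) (X : set R)
  : set 'cV[R]_n := [set x *: B | x in X].

Definition msum (V : zmodType) (X Y : set V) : set V :=
  [set a + b | a in X & b in Y].
Definition mdiff (V : zmodType) (X Y : set V) : set V :=
  [set c | msum [set c] Y `<=` X].

From HB Require Import structures.
From mathcomp Require Import all_boot all_order all_algebra.
From mathcomp Require Import classical_sets reals.
From mathcomp Require Import lra.
Set Implicit Arguments. Unset Strict Implicit. Unset Printing Implicit Defensive.
Import Order.TTheory GRing.Theory Num.Theory.
Local Open Scope ring_scope.
Local Open Scope classical_set_scope.

(* 1. Shifting the input by one step gives the recursion
        R(m+1,0) = v U (+) R(m,0)                       (reach_succ),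
      which already yields the inclusion of v U in the Minkowski difference.
   2. Conversely let c be in the difference.  For every direction w the
      linear functional <w,.> attains its maximum on R(m,0) at some y*
      (reach_argmax); since c + y* = t v + y with t in U, y in R(m,0), we get
      the support bound  <w,c> <= max(lo <w,v>, hi <w,v>)  (mdiff_support).
   3. A vector c satisfying this support bound for every w lies on the
      segment [lo,hi] v: directions orthogonal to v force c to be a multiple
      t v of v (orth_bound_collinear), and the directions v, -v force
      lo <= t <= hi (segment_of_support_bound). *)

Section InnerProduct.
Variables (R : realFieldType) (n : nat).

Definition dot (w x : 'cV[R]_n) : R := \sum_j w j 0 * x j 0.

Lemma dotD w x y : dot w (x + y) = dot w x + dot w y.
Proof. by rewrite /dot -big_split /=; apply: eq_bigr => j _; rewrite mxE mulrDr. Qed.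

Lemma dotZ w a x : dot w (a *: x) = a * dot w x.
Proof. by rewrite /dot mulr_sumr; apply: eq_bigr => j _; rewrite mxE mulrCA. Qed.

Lemma dotN w x : dot w (- x) = - dot w x.
Proof. by rewrite -scaleN1r dotZ mulN1r. Qed.

Lemma dotB w x y : dot w (x - y) = dot w x - dot w y.
Proof. by rewrite dotD dotN. Qed.

Lemma dotC w x : dot w x = dot x w.
Proof. by apply: eq_bigr => j _; rewrite mulrC. Qed.

Lemma dot_ge0 x : 0 <= dot x x.
Proof. by apply: sumr_ge0 => j _; rewrite -expr2 sqr_ge0. Qed.

Lemma dot_le0_eq0 x : dot x x <= 0 -> x = 0.
Proof.
move=> x_le0; have xx0 : dot x x = 0 by apply/eqP; rewrite eq_le x_le0 dot_ge0.
apply/matrixP => j k; rewrite (ord1 k) mxE.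
have : x j 0 * x j 0 = 0.
  by apply: (psumr_eq0P _ xx0) => // l _; rewrite -expr2 sqr_ge0.
by move/eqP; rewrite mulf_eq0 orbb => /eqP.
Qed.

(* If <w,c> <= 0 for every w orthogonal to v, then c is a multiple of v:
   test with w = c - (<c,v>/<v,v>) v, the component of c orthogonal to v. *)
Lemma orth_bound_collinear (c v : 'cV[R]_n) :
  (forall w, dot w v = 0 -> dot w c <= 0) -> exists t, c = t *: v.
Proof.
move=> orth_le0; have [vv0 | vv_neq0] := eqVneq (dot v v) 0.
  have v0 : v = 0 by apply: dot_le0_eq0; rewrite vv0.
  exists 0; rewrite scale0r; apply: dot_le0_eq0; apply: orth_le0.
  by rewrite v0 -(subrr (0 : 'cV_n)) dotB subrr.
pose t := dot c v / dot v v; pose w := c - t *: v.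
have wv0 : dot w v = 0 by rewrite dotC dotB dotZ (dotC v c) divfK ?subrr.
exists t; apply/eqP; rewrite -subr_eq0 -/w; apply/eqP/dot_le0_eq0.
by have := orth_le0 w wv0; rewrite {2}/w dotB dotZ wv0 mulr0 subr0.
Qed.

Lemma segment_of_support_bound (lo hi : R) (c v : 'cV[R]_n) : lo <= hi ->
  (forall w, dot w c <= Num.max (lo * dot w v) (hi * dot w v)) ->
  exists2 t, lo <= t <= hi & c = t *: v.
Proof.
move=> lohi bound.
have [t c_eq] : exists t, c = t *: v.
  by apply: orth_bound_collinear => w wv0; have := bound w; rewrite wv0 !mulr0 maxxx.
subst c.
have [v0 | v_neq0] := eqVneq v 0.
  by exists lo; rewrite ?lexx ?lohi // v0 !scaler0.
have vv_gt0 : 0 < dot v v.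
  rewrite lt_def dot_ge0 andbT; apply: contra v_neq0 => /eqP vv0.
  by apply/eqP/dot_le0_eq0; rewrite vv0.
have up := bound v; have down := bound (- v).
rewrite dotZ max_r in up; last by rewrite ler_wpM2r ?dot_ge0.
rewrite dotZ dotC !dotN !mulrN max_l in down; last by rewrite lerN2 ler_wpM2r ?dot_ge0.
exists t => //; apply/andP; split; rewrite -(ler_pM2r vv_gt0); lra.
Qed.

End InnerProduct.

Lemma Icc_mul_le_max (R : realType) (lo hi t d : R) :
  Icc lo hi t -> t * d <= Num.max (lo * d) (hi * d).
Proof.
case/andP => lot thi; have [d_ge0 | d_lt0] := leP 0 d.
  by rewrite le_max (ler_wpM2r d_ge0 thi) orbT.
by rewrite le_max (ler_wnM2r (ltW d_lt0) lot).
Qed.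

Section Reachability.
Variables (R : comNzRingType) (n : nat) (A : 'M[R]_n) (b : 'cV[R]_n).

Lemma traj_shift (u : nat -> R) m :
  traj A b u m.+1 = u 0%N *: (A ^+ m *m b) + traj A b (fun k => u k.+1) m.
Proof.
elim: m u => [|m IH] u /=; first by rewrite mulmx0 add0r expr0 mul1mx addr0.
rewrite [in LHS]/traj -/(traj A b u m.+1) IH mulmxDr addrA exprS -mulmxA.
by rewrite -scalemxAr.
Qed.

Lemma reach_succ (U : set R) m :
  reach A b U m.+1 = msum (vec_image (A ^+ m *m b) U) (reach A b U m).
Proof.
rewrite eqEsubset; split.
  move=> _ [u [uU <-]]; rewrite traj_shift.
  exists (u 0%N *: (A ^+ m *m b)); first by exists (u 0%N).
  by exists (traj A b (fun k => u k.+1) m) => //; exists (fun k => u k.+1).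
move=> _ [_ [t tU <-] [_ [u [uU <-]] <-]].
exists (fun k => if k is k'.+1 then u k' else t); split; first by case.
by rewrite traj_shift.
Qed.

End Reachability.

Section SupportFunction.
Variables (R : realType) (n : nat) (A : 'M[R]_n) (b : 'cV[R]_n) (lo hi : R).
Hypothesis lohi : lo <= hi.

(* Every linear functional attains its maximum on R(m,0); the maximizer is
   built greedily, choosing at each step the endpoint of [lo,hi] that
   maximizes the contribution of the newest term A^m b. *)
Lemma reach_argmax (w : 'cV[R]_n) m : exists2 ymax, reach A b (Icc lo hi) m ymax &
  forall y, reach A b (Icc lo hi) m y -> dot w y <= dot w ymax.
Proof.
elim: m => [|m [ymax reach_ymax ymax_max]].
  exists 0; first by exists (fun _ => lo); split => //; rewrite /Icc /= lexx lohi.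
  by move=> y [u [_ <-]].
pose v := A ^+ m *m b; pose tmax := if 0 <= dot w v then hi else lo.
have tmaxU : Icc lo hi tmax by rewrite /Icc /tmax; case: ifP; rewrite /= lexx lohi.
exists (tmax *: v + ymax).
  by rewrite reach_succ; exists (tmax *: v); [exists tmax | exists ymax].
rewrite reach_succ => _ [_ [t /andP[lot thi] <-] [y reach_y <-]].
rewrite !dotD !dotZ; apply: lerD; last exact: ymax_max.
rewrite /tmax; case: ifP => [v_ge0 | /negbT]; first exact: ler_wpM2r.
by rewrite -ltNge => /ltW v_le0; apply: ler_wnM2r.
Qed.

Lemma mdiff_support (c : 'cV[R]_n) m :
  mdiff (reach A b (Icc lo hi) m.+1) (reach A b (Icc lo hi) m) c ->
  forall w, dot w c <= Num.max (lo * dot w (A ^+ m *m b)) (hi * dot w (A ^+ m *m b)).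
Proof.
move=> c_diff w; have [ymax reach_ymax ymax_max] := reach_argmax w m.
have : reach A b (Icc lo hi) m.+1 (c + ymax).
  by apply: c_diff; exists c => //; exists ymax.
rewrite reach_succ => -[_ [t tU <-] [y reach_y sum_eq]].
have := congr1 (dot w) sum_eq; rewrite !dotD dotZ => dot_eq.
have := ymax_max y reach_y; have := Icc_mul_le_max (dot w (A ^+ m *m b)) tU.
lra.
Qed.

End SupportFunction.

Theorem theorem1 (R : realType) (n : nat) (A : 'M[R]_n) (b : 'cV[R]_n)
  (ulo uhi : R) (hu : ulo < uhi) (i : nat) (hi : (0 < i)%N) :
  vec_image (A ^+ i.-1 *m b) (Icc ulo uhi)
  = mdiff (reach A b (Icc ulo uhi) i) (reach A b (Icc ulo uhi) i.-1).
Proof.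
case: i hi => // m _ /=; rewrite eqEsubset; split.
  move=> x x_seg _ [_ -> [y reach_y <-]].
  by rewrite reach_succ; exists x => //; exists y.
move=> c c_diff; have c_support := mdiff_support (ltW hu) c_diff.
have [t tU ->] := segment_of_support_bound (ltW hu) c_support.
by exists t.
Qed.
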